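(* Let $\mathcal{H}$ be a Hilbert space of finite dimension $d\ge 2$, let $\mathcal{F}(\mathcal{H})\subseteq\mathcal{D}(\mathcal{H})$ be a closed set of free states, and let $\rho\in\mathcal{D}(\mathcal{H})\setminus\mathcal{F}(\mathcal{H})$. For $s>0$ and $m=2,\dots,d$ let $W_m(\rho,s)$ be Hermitian operators on $\mathcal{H}^{\otimes m}$ satisfying $\operatorname{tr}[W_m(\rho,s)\eta^{\otimes m}]=S_m\!\left(\frac{1+s}{s}\eta-\frac1s\rho\right)$ for all $\eta\in\mathcal{D}(\mathcal{H})$. If $0<s'<s$, then \[\{\eta\in\mathcal{D}(\mathcal{H}):\operatorname{tr}[W_m(\rho,s')\eta^{\otimes m}]\ge0\ \forall m=2,\dots,d\}\subsetneq\{\eta\in\mathcal{D}(\mathcal{H}):\operatorname{tr}[W_m(\rho,s)\eta^{\otimes m}]\ge0\ \forall m=2,\dots,d\}.\]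
   Context: $\mathcal{D}(\mathcal{H})$ is the set of density operators on $\mathcal{H}$. For a Hermitian operator $X$ on $\mathcal{H}$, define recursively $S_0(X)=1$ and $S_m(X)=\frac1m\sum_{l=1}^m(-1)^{l-1}\operatorname{tr}[X^l]\,S_{m-l}(X)$ for $m\ge1$. *)

From HB Require Import structures.
From mathcomp Require Import all_boot all_order all_algebra.
From mathcomp Require Import all_classical all_reals topology normedtype sequences.
From mathcomp Require Import complex mxtens.
Set Implicit Arguments. Unset Strict Implicit. Unset Printing Implicit Defensive.
Import Order.TTheory GRing.Theory Num.Theory numFieldNormedType.Exports.
Local Open Scope classical_set_scope.
Local Open Scope ring_scope.

Section QDefs.
Variable R : realType.
Local Notation C := (R[i]).

Definition adjmx (m n : nat) (A : 'M[C]_(m, n)) : 'M[C]_(n, m) :=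
  \matrix_(i, j) (A j i)^*.

Definition is_hermitian (n : nat) (A : 'M[C]_n) : Prop := adjmx A = A.

Definition psd (n : nat) (A : 'M[C]_n) : Prop :=
  is_hermitian A /\ forall v : 'cV[C]_n, 0 <= (adjmx v *m A *m v) 0 0.

Definition density (d : nat) (A : 'M[C]_d) : Prop := psd A /\ \tr A = 1.

(* matrix powers (valid for any dimension, including n = 0) *)
Fixpoint mxpow (n : nat) (A : 'M[C]_n) (l : nat) : 'M[C]_n :=
  match l with 0 => 1%:M | l'.+1 => A *m mxpow A l' end.

Fixpoint tdim (d m : nat) : nat :=
  match m with 0 => 1%N | m'.+1 => (d * tdim d m')%N end.

Fixpoint tpow (d : nat) (A : 'M[C]_d) (m : nat) : 'M[C]_(tdim d m) :=
  match m return 'M[C]_(tdim d m) with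
  | 0 => 1%:M
  | m'.+1 => A *t tpow A m'
  end.

Fixpoint Sseq (n : nat) (X : 'M[C]_n) (k : nat) : seq C :=
  match k with
  | 0 => [:: 1]
  | k'.+1 =>
      let s := Sseq X k' in
      rcons s (k'.+1%:R^-1 *
        \sum_(1 <= l < k'.+2) ((-1) ^+ (l.-1) * \tr (mxpow X l) * s`_(k'.+1 - l)))
  end.

Definition Sm (n : nat) (X : 'M[C]_n) (m : nat) : C := (Sseq X m)`_m.

(* closedness of a set of matrices (in the Euclidean topology of entries,
   real and imaginary parts), stated sequentially *)
Definition mx_closed (d : nat) (F : 'M[C]_d -> Prop) : Prop :=
  forall (u : nat -> 'M[C]_d) (eta : 'M[C]_d),
    (forall k, F (u k)) ->
    (forall i j, (fun k => complex.Re (u k i j)) @ \oo --> (complex.Re (eta i j) : R)) ->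
    (forall i j, (fun k => complex.Im (u k i j)) @ \oo --> (complex.Im (eta i j) : R)) ->
    F eta.

Definition witness_set (d : nat) (W : forall m, 'M[C]_(tdim d m)) (eta : 'M[C]_d) : Prop :=
  density eta /\ forall m, (2 <= m <= d)%N -> 0 <= \tr (W m *m tpow eta m).

End QDefs.

(* Write X_s(eta) = eta + (eta - rho) / s, so that tr[W_m(rho, s) eta^(x)m] = S_m(X_s(eta)).
   By Newton's identities S_m(X) is the m-th elementary symmetric function of the
   eigenvalues of X, and X_s(eta) is Hermitian of trace one, so S_1 = 1 and the
   conditions S_m >= 0 (2 <= m <= d) say exactly that no eigenvalue of X_s(eta) is
   negative: the witness set for s is {eta : X_s(eta) >= 0}.  Since
   X_s(eta) = (s'/s) X_s'(eta) + (1 - s'/s) eta, these sets grow with s.  For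
   strictness pick j with rho_jj > 0, a pure state sigma = |k><k| with k <> j, and
   eta = (rho + s sigma) / (1 + s): then X_s(eta) = sigma, whereas
   X_s'(eta)_jj = (s' - s) / (s' (1 + s)) rho_jj < 0. *)

From HB Require Import structures.
From mathcomp Require Import all_boot all_order all_algebra.
From mathcomp Require Import all_classical all_reals topology normedtype sequences.
From mathcomp Require Import complex mxtens.
From mathcomp Require Import spectral sesquilinear ring.
Set Implicit Arguments.
Unset Strict Implicit.
Unset Printing Implicit Defensive.
Import Order.TTheory GRing.Theory Num.Theory.
Local Open Scope ring_scope.

Section NewtonIdentities.
Variable C : comNzRingType.
Implicit Types (s : seq C) (x : C).

Definition esym_poly s : {poly C} := \prod_(x <- s) (1 + x *: 'X).
Definition esym s k := (esym_poly s)`_k.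
Definition psum s l := \sum_(x <- s) x ^+ l.

Lemma esym_nil k : esym [::] k = (k == 0)%:R.
Proof. by rewrite /esym /esym_poly big_nil coef1. Qed.

Lemma esym_cons x s k :
  esym (x :: s) k = esym s k + (if k is k'.+1 then x * esym s k' else 0).
Proof.
rewrite /esym /esym_poly big_cons mulrDl mul1r coefD -scalerAl coefZ coefXM.
by case: k => [|k] /=; rewrite ?mulr0.
Qed.

Lemma esym0 s : esym s 0 = 1.
Proof. by elim: s => [|x s IH]; rewrite ?esym_nil // esym_cons addr0. Qed.

Lemma esym_gt_size s k : (size s < k)%N -> esym s k = 0.
Proof.
elim: s k => [|x s IH] [|k] //=; first by rewrite esym_nil.
by rewrite ltnS => hk; rewrite esym_cons IH ?(IH k) ?mulr0 ?addr0 // ltnW.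
Qed.

Lemma psum_cons x s l : psum (x :: s) l = x ^+ l + psum s l.
Proof. by rewrite /psum big_cons. Qed.

Lemma newton_telescope x s m :
  \sum_(l < m) (-1) ^+ l * x ^+ l.+1 * esym (x :: s) (m - l.+1)
  = if m is m'.+1 then x * esym s m' else 0.
Proof.
elim: m => [|m IH]; first by rewrite big_ord0.
rewrite big_ord_recl subn1 /=.
have -> : \sum_(i < m) (-1) ^+ (bump 0 i) * x ^+ (bump 0 i).+1 *
            esym (x :: s) (m.+1 - (bump 0 i).+1)
          = - x * \sum_(l < m) (-1) ^+ l * x ^+ l.+1 * esym (x :: s) (m - l.+1).
  by rewrite mulr_sumr; apply: eq_bigr => i _; rewrite /bump add1n subSS !exprS; ring.
by rewrite IH esym_cons; case: m {IH} => [|m]; ring.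
Qed.

Lemma newton_identity s m :
  m%:R * esym s m = \sum_(l < m) (-1) ^+ l * psum s l.+1 * esym s (m - l.+1).
Proof.
elim: s m => [|x s IH] m.
  rewrite esym_nil big1 => [|l _]; last by rewrite /psum big_nil mulr0 mul0r.
  by case: m => [|m]; rewrite ?mulr0 // mul0r.
under eq_bigr => l _ do rewrite psum_cons mulrDr mulrDl.
rewrite big_split /= newton_telescope.
case: m => [|m]; first by rewrite !big_ord0 mul0r addr0.
under eq_bigr => l _ do rewrite esym_cons mulrDr.
rewrite big_split /= -IH big_ord_recr /= subnn mulr0 addr0.
under eq_bigr => l _ do rewrite subSS -subnSK //= mulrCA.
rewrite -mulr_sumr -IH esym_cons mulrS; ring.
Qed.
End NewtonIdentities.

Section SignsOfRoots.
Variable C : numFieldType.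
Implicit Types (s : seq C) (x : C).

Lemma esym_ge0 s : all (fun x => 0 <= x) s -> forall k, 0 <= esym s k.
Proof.
elim: s => [_ k|x s IH /= /andP[x_ge0 s_ge0] [|k]]; rewrite ?esym_nil ?ler0n //.
  by rewrite esym_cons addr0 IH.
by rewrite esym_cons addr_ge0 ?mulr_ge0 ?IH.
Qed.

(* If x < 0 were in s, then -1/x > 0 would be a root of esym_poly s, a
   polynomial with constant term 1 and nonnegative coefficients. *)
Lemma esym_ge0_nneg s : (forall k, (1 <= k <= size s)%N -> 0 <= esym s k) ->
  forall x, x \in s -> x \is Num.real -> 0 <= x.
Proof.
move=> esym_s_ge0 x x_s x_real; rewrite real_leNgt ?real0 //; apply/negP => x_lt0.
set t := - x^-1.
have t_gt0 : 0 < t by rewrite oppr_gt0 invr_lt0.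
have root_t : (esym_poly s).[t] = 0.
  rewrite horner_prod (big_rem x x_s) /= hornerD hornerZ hornerX hornerC.
  by rewrite /t mulrN mulfV ?ltr0_neq0 // subrr mul0r.
suff : 1 <= (esym_poly s).[t] by rewrite root_t ler10.
rewrite (@horner_coef_wide _ (size (esym_poly s)).+1) // big_ord_recl /=.
rewrite -/(esym s 0) esym0 expr0 mulr1 lerDl sumr_ge0 // => i _.
rewrite -/(esym s _) mulr_ge0 ?exprn_ge0 ?(ltW t_gt0) //.
case: (leqP (bump 0 i) (size s)) => [i_le|/esym_gt_size -> //].
by apply: esym_s_ge0; rewrite i_le.
Qed.

End SignsOfRoots.

Section SmElementarySymmetric.
Variables (R : realType) (n : nat).
Local Notation C := (R[i]).

Lemma Sseq_esym (X : 'M[C]_n) (s : seq C) :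
  (forall l, \tr (mxpow X l.+1) = psum s l.+1) ->
  forall k, size (Sseq X k) = k.+1 /\ forall j, (j <= k)%N -> (Sseq X k)`_j = esym s j.
Proof.
move=> tr_pow; elim=> [|k [size_k IH]] /=.
  by split=> // j; rewrite leqn0 => /eqP ->; rewrite esym0.
rewrite size_rcons size_k; split=> // j; rewrite nth_rcons size_k ltnS.
case: (leqP j k) => [j_le _|k_lt_j j_le]; first exact: IH.
have -> : j = k.+1 by apply/eqP; rewrite eqn_leq j_le.
rewrite eqxx big_add1 big_mkord /=.
under eq_bigr => l _ do rewrite tr_pow IH ?subSS ?leq_subr //.
by rewrite -newton_identity mulrA mulVf ?mul1r ?pnatr_eq0.
Qed.

Lemma Sm_esym (X : 'M[C]_n) (s : seq C) :
  (forall l, \tr (mxpow X l.+1) = psum s l.+1) -> forall m, Sm X m = esym s m.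
Proof. by move=> tr_pow m; rewrite /Sm; have [_ ->] := Sseq_esym tr_pow m. Qed.

End SmElementarySymmetric.

Section Adjoint.
Variable R : realType.
Local Notation C := (R[i]).

Lemma adjmxE m p (A : 'M[C]_(m, p)) : adjmx A = map_mx Num.conj A^T.
Proof. by apply/matrixP => i j; rewrite !mxE. Qed.

Lemma adjmxM m p q (A : 'M[C]_(m, p)) (B : 'M[C]_(p, q)) :
  adjmx (A *m B) = adjmx B *m adjmx A.
Proof. by rewrite !adjmxE trmx_mul map_mxM. Qed.

Lemma adjmxD m p (A B : 'M[C]_(m, p)) : adjmx (A + B) = adjmx A + adjmx B.
Proof. by apply/matrixP => i j; rewrite !mxE rmorphD. Qed.

Lemma adjmxN m p (A : 'M[C]_(m, p)) : adjmx (- A) = - adjmx A.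
Proof. by apply/matrixP => i j; rewrite !mxE rmorphN. Qed.

Lemma adjmx_realZ m p (x : R) (A : 'M[C]_(m, p)) :
  adjmx ((x%:C)%C *: A) = (x%:C)%C *: adjmx A.
Proof. by apply/matrixP => i j; rewrite !mxE rmorphM; congr (_ * _); exact: conjc_real. Qed.

Lemma adjmx_delta m p (i : 'I_m) (j : 'I_p) :
  adjmx (delta_mx i j : 'M[C]_(m, p)) = delta_mx j i.
Proof.
by apply/matrixP => a b; rewrite !mxE andbC; case: (_ && _); rewrite ?conjC1 ?conjC0.
Qed.

End Adjoint.

Section PositiveSemidefinite.
Variables (R : realType) (n : nat).
Local Notation C := (R[i]).
Implicit Types (A B : 'M[C]_n) (v : 'cV[C]_n).

Definition qform v A := (adjmx v *m A *m v) 0 0.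

Lemma qformD v A B : qform v (A + B) = qform v A + qform v B.
Proof. by rewrite /qform mulmxDr mulmxDl mxE. Qed.

Lemma qformZ v c A : qform v (c *: A) = c * qform v A.
Proof. by rewrite /qform -scalemxAr -scalemxAl mxE. Qed.

Lemma qform_delta j A : qform (delta_mx j 0) A = A j j.
Proof. by rewrite /qform adjmx_delta -rowE -colE !mxE. Qed.

Lemma psdD A B : psd A -> psd B -> psd (A + B).
Proof.
move=> [A_herm A_ge0] [B_herm B_ge0].
split; first by rewrite /is_hermitian adjmxD A_herm B_herm.
by move=> v; rewrite -/(qform v _) qformD addr_ge0 ?A_ge0 ?B_ge0.
Qed.

Lemma psd_realZ (a : R) A : 0 <= a -> psd A -> psd ((a%:C)%C *: A).
Proof.
move=> a_ge0 [A_herm A_ge0]; split; first by rewrite /is_hermitian adjmx_realZ A_herm.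
by move=> v; rewrite -/(qform v _) qformZ mulr_ge0 ?ler0c ?A_ge0.
Qed.

Lemma psd_diag_ge0 A j : psd A -> 0 <= A j j.
Proof. by move=> [_ A_ge0]; rewrite -qform_delta; apply: A_ge0. Qed.

Lemma density_conv (a : R) A B : 0 <= a <= 1 -> density A -> density B ->
  density ((a%:C)%C *: A + ((1 - a)%:C)%C *: B).
Proof.
move=> /andP[a_ge0 a_le1] [A_psd trA] [B_psd trB].
split; first by apply: psdD; apply: psd_realZ; rewrite ?subr_ge0.
by rewrite mxtraceD !mxtraceZ trA trB !mulr1 -rmorphD /= addrC subrK rmorph1.
Qed.

Lemma density_delta (k : 'I_n) : density (delta_mx k k : 'M[C]_n).
Proof.
split; last first.
  rewrite /mxtrace (bigD1 k) //= mxE !eqxx big1 ?addr0 // => i /negbTE i_neq_k.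
  by rewrite mxE i_neq_k.
split; first exact: adjmx_delta.
move=> v; rewrite -/(qform v _) /qform -(mul_delta_mx (0 : 'I_1)) !mulmxA -colE.
by rewrite -mulmxA -rowE !mxE big_ord1 !mxE mulrC mul_conjC_ge0.
Qed.

Lemma density_diag_gt0 A : density A -> exists j, 0 < A j j.
Proof.
move=> [A_psd trA]; case: (pickP (fun j => 0 < A j j)) => [j|A_le0]; first by exists j.
move: trA; rewrite /mxtrace big1 => [/eqP|j _]; first by rewrite eq_sym oner_eq0.
by have := psd_diag_ge0 j A_psd; rewrite le_eqVlt A_le0 orbF => /eqP <-.
Qed.

End PositiveSemidefinite.

Section SpectralCharacterization.
Variables (R : realType) (n : nat).
Local Notation C := (R[i]).
Implicit Types (P X : 'M[C]_n) (lam : 'rV[C]_n) (v : 'cV[C]_n).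

Lemma hermitian_unitary_diag X : is_hermitian X ->
  exists P lam, [/\ P *m adjmx P = 1%:M, adjmx P *m P = 1%:M,
    X = adjmx P *m diag_mx lam *m P & forall j, lam 0 j \is Num.real].
Proof.
move=> X_herm; have X_hermsym : X \is hermsymmx.
  by apply/is_hermitianmxP; rewrite /= expr0 scale1r -adjmxE X_herm.
have invP : invmx (spectralmx X) = adjmx (spectralmx X).
  by rewrite adjmxE invmx_unitary ?spectral_unitarymx.
exists (spectralmx X), (spectral_diag X); split.
- by rewrite adjmxE; apply/unitarymxP/spectral_unitarymx.
- by rewrite -invP mulVmx ?spectral_unit.
- by rewrite -invP; apply/orthomx_spectralP/hermitian_normalmx.
- by move=> j; have /mxOverP := hermitian_spectral_diag_real X_hermsym; apply.
Qed.

Lemma mxpow_diag lam l : mxpow (diag_mx lam) l = diag_mx (\row_j lam 0 j ^+ l).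
Proof.
elim: l => [|l IH] /=.
  by apply/matrixP => i j; rewrite !mxE; case: eqP => // ->; rewrite mxE expr0.
by rewrite IH mulmx_diag; congr diag_mx; apply/rowP => j; rewrite !mxE exprS.
Qed.

Lemma mxpow_unitary_conj P X l : P *m adjmx P = 1%:M -> adjmx P *m P = 1%:M ->
  mxpow (adjmx P *m X *m P) l = adjmx P *m mxpow X l *m P.
Proof.
move=> PPa PaP; elim: l => [|l IH] /=; first by rewrite mulmx1.
by rewrite IH !mulmxA -(mulmxA _ P) PPa mulmx1 -!mulmxA.
Qed.

Lemma mxtrace_mxpow_unitary_diag P lam l :
  P *m adjmx P = 1%:M -> adjmx P *m P = 1%:M ->
  \tr (mxpow (adjmx P *m diag_mx lam *m P) l) = \sum_j lam 0 j ^+ l.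
Proof.
move=> PPa PaP; rewrite mxpow_unitary_conj // mxtrace_mulC mulmxA PPa mul1mx.
by rewrite mxpow_diag mxtrace_diag; apply: eq_bigr => j _; rewrite mxE.
Qed.

Lemma qform_unitary_diag P lam v :
  qform v (adjmx P *m diag_mx lam *m P) = \sum_j ((P *m v) j 0)^* * lam 0 j * (P *m v) j 0.
Proof.
rewrite /qform !mulmxA -adjmxM -(mulmxA _ P v) mul_mx_diag !mxE.
by apply: eq_bigr => j _; rewrite !mxE.
Qed.

Lemma qform_unitary_diag_ge0 P lam : P *m adjmx P = 1%:M ->
  (forall v, 0 <= qform v (adjmx P *m diag_mx lam *m P)) <-> (forall j, 0 <= lam 0 j).
Proof.
move=> PPa; split=> [qform_ge0 j | lam_ge0 v].
  have := qform_ge0 (adjmx P *m delta_mx j 0).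
  rewrite qform_unitary_diag mulmxA PPa mul1mx (bigD1 j) //= big1 => [|k /negbTE kj].
    by rewrite !mxE !eqxx conjC1 mul1r mulr1 addr0.
  by rewrite !mxE kj mulr0.
rewrite qform_unitary_diag sumr_ge0 // => j _.
by rewrite mulrAC mulr_ge0 // mulrC mul_conjC_ge0.
Qed.

(* The trace condition supplies S_1 = 1, so the conditions for m >= 2 control
   all elementary symmetric functions of the eigenvalues. *)
Lemma hermitian_Sm_ge0_psd X : is_hermitian X -> \tr X = 1 ->
  (forall m, (2 <= m <= n)%N -> 0 <= Sm X m) <-> psd X.
Proof.
move=> X_herm trX; have [P [lam [PPa PaP X_eq lam_real]]] := hermitian_unitary_diag X_herm.
pose eigs := [seq lam 0 j | j <- enum 'I_n].
have tr_pow l : \tr (mxpow X l) = psum eigs l.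
  by rewrite X_eq mxtrace_mxpow_unitary_diag // /psum big_map big_enum.
have Sm_eigs := Sm_esym (fun l => tr_pow l.+1).
have size_eigs : size eigs = n by rewrite size_map size_enum_ord.
have esym1 : esym eigs 1 = 1.
  have := newton_identity eigs 1; rewrite big_ord1 esym0 mul1r mulr1 /= expr0 mul1r => ->.
  by rewrite -tr_pow /= mulmx1.
have psdE : psd X <-> forall j, 0 <= lam 0 j.
  have := qform_unitary_diag_ge0 lam PPa; rewrite -X_eq => qformE.
  by split=> [[_ /qformE] | /qformE qform_ge0].
rewrite psdE; split=> [Sm_ge0 j | lam_ge0 m _].
  have eigs_j : lam 0 j \in eigs by apply: map_f; rewrite mem_enum.
  apply: (esym_ge0_nneg _ eigs_j (lam_real j)) => k.
  rewrite size_eigs; case: k => [|[|k]] // k_le; first by rewrite esym1.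
  by rewrite -Sm_eigs Sm_ge0.
by rewrite Sm_eigs esym_ge0 //; apply/allP => _ /mapP[j _ ->].
Qed.

End SpectralCharacterization.

Section Extrapolation.
Variables (R : realType) (n : nat).
Local Notation C := (R[i]).
Implicit Types (rho eta sigma : 'M[C]_n) (s t : R).

(* X_t(eta) = eta + (eta - rho) / t: the point beyond eta on the ray from rho. *)
Definition extrapolate t rho eta : 'M[C]_n :=
  ((((1 + t) / t)%:C)%C *: eta - ((t^-1)%:C)%C *: rho).

Lemma extrapolate_hermitian t rho eta :
  is_hermitian rho -> is_hermitian eta -> is_hermitian (extrapolate t rho eta).
Proof.
move=> rho_herm eta_herm.
by rewrite /is_hermitian adjmxD adjmxN !adjmx_realZ rho_herm eta_herm.
Qed.

Lemma mxtrace_extrapolate t rho eta : t != 0 -> \tr rho = 1 -> \tr eta = 1 ->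
  \tr (extrapolate t rho eta) = 1.
Proof.
move=> t_neq0 tr_rho tr_eta; rewrite linearB /= !mxtraceZ tr_rho tr_eta !mulr1 -rmorphB /=.
have -> : (1 + t) / t - t^-1 = 1 by field.
by rewrite rmorph1.
Qed.

Lemma extrapolate_comb s s' rho eta : s != 0 -> s' != 0 ->
  extrapolate s rho eta =
  (((s' / s)%:C)%C *: extrapolate s' rho eta + (((1 - s' / s)%:C)%C *: eta)).
Proof.
move=> s_neq0 s'_neq0.
rewrite /extrapolate scalerBr !scalerA -!rmorphM /= addrAC -scalerDl -rmorphD /=.
have -> : s' / s * ((1 + s') / s') + (1 - s' / s) = (1 + s) / s by field; apply/andP.
by have -> : s' / s / s' = s^-1 by field; apply/andP.
Qed.

Lemma psd_extrapolate_mono s s' rho eta : 0 < s' -> s' <= s ->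
  psd eta -> psd (extrapolate s' rho eta) -> psd (extrapolate s rho eta).
Proof.
move=> s'_gt0 s'_le_s eta_psd X_psd; have s_gt0 := lt_le_trans s'_gt0 s'_le_s.
rewrite (extrapolate_comb rho eta (lt0r_neq0 s_gt0) (lt0r_neq0 s'_gt0)).
apply: psdD; apply: psd_realZ => //; first by rewrite divr_ge0 ?ltW.
by rewrite subr_ge0 ler_pdivrMr // mul1r.
Qed.

Lemma extrapolate_conv s rho sigma : s != 0 -> 1 + s != 0 ->
  extrapolate s rho (((1 + s)^-1%:C)%C *: rho + (((1 - (1 + s)^-1)%:C)%C *: sigma)) = sigma.
Proof.
move=> s_neq0 s1_neq0.
rewrite /extrapolate scalerDr !scalerA -!rmorphM /= addrAC -scalerBl -rmorphB /=.
have -> : (1 + s) / s / (1 + s) - s^-1 = 0 by field; apply/andP.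
have -> : (1 + s) / s * (1 - (1 + s)^-1) = 1 by field; apply/andP.
by rewrite rmorph0 rmorph1 scale0r add0r scale1r.
Qed.

Lemma extrapolate_conv_entry t a rho sigma i j : sigma i j = 0 ->
  (extrapolate t rho (((a%:C)%C *: rho + (((1 - a)%:C)%C *: sigma)))) i j
  = (((1 + t) / t * a - t^-1)%:C)%C * rho i j.
Proof.
move=> sigma_ij; rewrite !mxE sigma_ij mulr0 addr0 mulrA -mulrBl.
by rewrite -rmorphM -rmorphB.
Qed.

End Extrapolation.

Section WitnessSets.
Variables (R : realType) (d : nat) (rho : 'M[R[i]]_d).
Variable W : R -> forall m : nat, 'M[R[i]]_(tdim d m).
Hypothesis rho_density : density rho.
Hypothesis W_tr : forall (s : R) (m : nat), 0 < s -> (2 <= m <= d)%N ->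
  forall eta, density eta -> \tr (W s m *m tpow eta m) = Sm (extrapolate s rho eta) m.

Lemma witness_setE t eta : 0 < t ->
  witness_set (W t) eta <-> density eta /\ psd (extrapolate t rho eta).
Proof.
move=> t_gt0; have [[rho_herm _] tr_rho] := rho_density.
split=> -[eta_density W_ge0]; split=> //; have [[eta_herm _] tr_eta] := eta_density;
  have := hermitian_Sm_ge0_psd (extrapolate_hermitian t rho_herm eta_herm)
            (mxtrace_extrapolate (lt0r_neq0 t_gt0) tr_rho tr_eta).
  by move=> /iffLR; apply=> m m_range; rewrite -W_tr ?W_ge0.
by move=> /iffRL /(_ W_ge0) Sm_ge0 m m_range; rewrite W_tr ?Sm_ge0.
Qed.

Lemma witness_set_mono s s' eta : 0 < s' -> s' <= s ->
  witness_set (W s') eta -> witness_set (W s) eta.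
Proof.
move=> s'_gt0 s'_le_s /(witness_setE _ s'_gt0) [[eta_psd tr_eta] X_psd].
apply/(witness_setE _ (lt_le_trans s'_gt0 s'_le_s)); split; first by split.
exact: psd_extrapolate_mono X_psd.
Qed.

Lemma witness_set_strict s s' : (2 <= d)%N -> 0 < s' -> s' < s ->
  exists eta, witness_set (W s) eta /\ ~ witness_set (W s') eta.
Proof.
move=> d_ge2 s'_gt0 s'_lt_s; have s_gt0 := lt_trans s'_gt0 s'_lt_s.
have s1_gt0 : 0 < 1 + s by rewrite addr_gt0.
have [j rho_jj_gt0] := density_diag_gt0 rho_density.
have [k k_neq_j] : exists k : 'I_d, k != j.
  case: (eqVneq (Ordinal (ltnW d_ge2)) j) => [<-|]; first by exists (Ordinal d_ge2).
  by exists (Ordinal (ltnW d_ge2)).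
pose a := (1 + s)^-1.
have a_range : 0 <= a <= 1 by rewrite invr_ge0 (ltW s1_gt0) invf_le1 // lerDl ltW.
pose eta := (a%:C)%C *: rho + ((1 - a)%:C)%C *: (delta_mx k k : 'M[R[i]]_d).
have eta_density : density eta := density_conv a_range rho_density (density_delta R k).
exists eta; split.
  apply/(witness_setE _ s_gt0); split=> //.
  by rewrite extrapolate_conv ?lt0r_neq0 //; case: (density_delta R k).
move=> /(witness_setE _ s'_gt0) [_ /(psd_diag_ge0 j)].
rewrite extrapolate_conv_entry; last by rewrite mxE eq_sym (negbTE k_neq_j).
rewrite pmulr_lge0 // ler0c.
have -> : (1 + s') / s' * a - s'^-1 = (s' - s) / (s' * (1 + s)).
  by rewrite /a; field; apply/andP; split; rewrite lt0r_neq0.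
by rewrite pmulr_lge0 ?invr_gt0 ?mulr_gt0 // subr_ge0 leNgt s'_lt_s.
Qed.

End WitnessSets.

Theorem proposition5 (R : realType) (d : nat) (hd : (2 <= d)%N)
  (F : 'M[R[i]]_d -> Prop)
  (hFD : forall eta, F eta -> density eta)
  (hFc : mx_closed F)
  (rho : 'M[R[i]]_d) (hrho : density rho) (hrhoF : ~ F rho)
  (W : R -> forall m : nat, 'M[R[i]]_(tdim d m))
  (hWh : forall (s : R) (m : nat), 0 < s -> (2 <= m <= d)%N -> is_hermitian (W s m))
  (hWtr : forall (s : R) (m : nat), 0 < s -> (2 <= m <= d)%N ->
     forall eta : 'M[R[i]]_d, density eta ->
       \tr (W s m *m tpow eta m)
       = Sm ((((1 + s) / s)%:C)%C *: eta - ((s^-1)%:C)%C *: rho) m)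
  (s s' : R) (hs' : 0 < s') (hss' : s' < s) :
  (forall eta, witness_set (W s') eta -> witness_set (W s) eta) /\
  (exists eta, witness_set (W s) eta /\ ~ witness_set (W s') eta).
Proof.
split; first by move=> eta; apply: (witness_set_mono hrho hWtr) hs' (ltW hss').
exact: (witness_set_strict hrho hWtr hd hs' hss').
Qed.
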